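(* Let $f_{r,k}(x)=x^2\exp(r-x)+k$ and $c=2$. For any $0\leq k<2$ there exists $r^*=r^*(k)$ such that for all $r\geq r^*(k)$, \[ f_{r,k}^2(c)<c<f_{r,k}(c). \] Moreover, for $0<k<2$ the value $r^*(k)$ can be chosen such that, in addition, for all $r\geq r^*(k)$ the interval $[f_{r,k}^2(c),f_{r,k}(c)]$ contains exactly one fixed point of $f_{r,k}$.
   Context: $c=2$ is the unique critical point of $f_{r,k}$ on $(0,\infty)$ (the point of maximum of $f_{r,k}$ on $[0,\infty)$). *)

From Stdlib Require Import Reals.
Open Scope R_scope.

Definition frk (r k x : R) : R := x ^ 2 * exp (r - x) + k.

(* the critical point c = 2 *)
Definition c : R := 2.

(* The map x |-> x^2 exp(r - x) peaks at c = 2 and decays like exp(-x) at infinity.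
   For large r the first iterate f(c) = 4 exp(r - 2) + k is huge, so the second
   iterate f(f(c)) falls back to within 576 / f(c) of k, below c.  On [c, oo)
   the map is nonincreasing, so x - f(x) increases strictly there and has at most
   one zero, which the intermediate value theorem provides in [c, f(c)]; on
   [f^2(c), c) we have x > k, hence f(x) >= k^2 exp(r - 2) + k > c > x once
   exp(r - 2) >= 2 / k^2. *)

From Stdlib Require Import Reals Lra Psatz.
Open Scope R_scope.

Lemma exp_le_compat x y : x <= y -> exp x <= exp y.
Proof.
  intros [Hlt | ->]; [now left; apply exp_increasing | lra].
Qed.

Lemma le_exp_of_ln_le M x : 0 < M -> ln M <= x -> M <= exp x.
Proof.
  intros HM Hx. rewrite <- (exp_ln M HM). now apply exp_le_compat.
Qed.

Lemma exp_INR_mul n x : exp (INR n * x) = exp x ^ n.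
Proof.
  induction n as [| n IH].
  - simpl. rewrite Rmult_0_l. apply exp_0.
  - rewrite S_INR, Rmult_plus_distr_r, Rmult_1_l, exp_plus, IH. simpl. ring.
Qed.

Lemma exp_2_le_9 : exp 2 <= 9.
Proof.
  replace 2 with (INR 2 * 1) by (simpl; ring).
  rewrite exp_INR_mul.
  pose proof exp_le_3. pose proof (exp_pos 1). simpl. nra.
Qed.

Lemma pow_div_le_exp n x : (0 < n)%nat -> 0 <= x -> (x / INR n) ^ n <= exp x.
Proof.
  intros Hn Hx.
  assert (Hn' : 0 < INR n) by now apply lt_0_INR.
  replace x with (INR n * (x / INR n)) at 2 by (field; lra).
  rewrite exp_INR_mul.
  apply pow_incr. split.
  - apply Rmult_le_pos; [lra | left; now apply Rinv_0_lt_compat].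
  - pose proof (exp_ineq1_le (x / INR n)). lra.
Qed.

(* y = x (1 + s/x) <= x exp(s/x) with s = y - x, and 2 s / x <= s since x >= 2. *)
Lemma sqr_le_mul_exp_sub x y : 2 <= x <= y -> y ^ 2 <= x ^ 2 * exp (y - x).
Proof.
  intros [Hx Hxy].
  set (t := (y - x) / x).
  assert (Ht : 0 <= t)
    by (apply Rmult_le_pos; [lra | left; apply Rinv_0_lt_compat; lra]).
  assert (Hy : y = x * (1 + t)) by (unfold t; field; lra).
  assert (H2t : 2 * t <= y - x).
  { unfold t. apply (Rmult_le_reg_r x); [lra |].
    replace (2 * ((y - x) / x) * x) with (2 * (y - x)) by (field; lra). nra. }
  assert (Hsq : (1 + t) ^ 2 <= exp (y - x)).
  { replace (y - x) with (t + t + (y - x - 2 * t)) by ring.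
    rewrite !exp_plus.
    pose proof (exp_ineq1_le t).
    assert (1 <= exp (y - x - 2 * t)) by (pose proof (exp_ineq1_le (y - x - 2 * t)); lra).
    assert ((1 + t) * (1 + t) <= exp t * exp t) by nra.
    simpl. nra. }
  replace (y ^ 2) with (x ^ 2 * (1 + t) ^ 2) by (rewrite Hy; ring).
  apply Rmult_le_compat_l; [apply pow2_ge_0 | exact Hsq].
Qed.

Section Dynamics.

Variables r k : R.

Lemma frk_c : frk r k c = 4 * exp (r - 2) + k.
Proof. unfold frk, c. ring. Qed.

Lemma frk_gt_k x : 0 < x -> k < frk r k x.
Proof.
  intros Hx. unfold frk.
  pose proof (exp_pos (r - x)). pose proof (pow_lt x 2 Hx). nra.
Qed.

Lemma frk_antitone x y : c <= x <= y -> frk r k y <= frk r k x.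
Proof.
  unfold c, frk. intros Hxy.
  pose proof (sqr_le_mul_exp_sub x y Hxy) as Hsq.
  replace (r - x) with ((y - x) + (r - y)) by ring.
  rewrite exp_plus.
  pose proof (exp_pos (r - y)). nra.
Qed.

Lemma continuity_frk : continuity (frk r k).
Proof. unfold frk. reg. Qed.

(* exp A >= (A/4)^4 and exp r = exp (r - 2) exp 2 <= (A/4) 9. *)
Lemma sqr_mul_exp_le_inv A :
  0 < A -> 4 * exp (r - 2) <= A -> A ^ 2 * exp (r - A) <= 576 / A.
Proof.
  intros HA Hu.
  assert (Hsplit : exp (r - A) * exp A = exp (r - 2) * exp 2).
  { rewrite <- !exp_plus. f_equal. ring. }
  pose proof (pow_div_le_exp 4 A ltac:(lia) ltac:(lra)) as Hpow.
  pose proof exp_2_le_9. pose proof (exp_pos (r - A)).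
  replace (INR 4) with 4 in Hpow by (simpl; ring).
  set (X := A ^ 2 * exp (r - A)).
  assert (HX : X * exp A <= 9 / 4 * A ^ 3).
  { unfold X. rewrite Rmult_assoc, Hsplit.
    assert (exp (r - 2) * exp 2 <= A / 4 * 9) by (pose proof (exp_pos (r - 2)); nra).
    simpl. nra. }
  assert (HX' : X * (A / 4) ^ 4 <= 9 / 4 * A ^ 3).
  { assert (0 <= X) by (unfold X; pose proof (pow2_ge_0 A); nra). nra. }
  apply (Rmult_le_reg_r A); [lra |].
  replace (576 / A * A) with 576 by (field; lra).
  apply (Rmult_le_reg_r (A ^ 3)); [apply pow_lt; lra |].
  replace (X * A * A ^ 3) with (256 * (X * (A / 4) ^ 4)) by field.
  lra.
Qed.

Lemma frk_fixed_point_ge_c_unique p q :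
  c <= p -> c <= q -> frk r k p = p -> frk r k q = q -> p = q.
Proof.
  intros Hp Hq Hfp Hfq.
  destruct (Rle_lt_dec p q) as [Hpq | Hqp].
  - pose proof (frk_antitone p q (conj Hp Hpq)). lra.
  - pose proof (frk_antitone q p (conj Hq (Rlt_le _ _ Hqp))). lra.
Qed.

Lemma frk_gt_id_below_c p :
  0 < k -> 2 <= k ^ 2 * exp (r - 2) -> k <= p < c -> p < frk r k p.
Proof.
  unfold c, frk. intros Hk Hu [Hkp Hpc].
  pose proof (exp_le_compat (r - 2) (r - p) ltac:(lra)).
  pose proof (pow_incr k p 2 (conj (Rlt_le _ _ Hk) Hkp)).
  pose proof (exp_pos (r - 2)). pose proof (pow2_ge_0 k).
  nra.
Qed.

Hypothesis k_range : 0 <= k < 2.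
Hypothesis r_large : 150 / (2 - k) <= exp (r - 2).

Lemma c_lt_frk_c : c < frk r k c.
Proof.
  rewrite frk_c. unfold c.
  assert (75 <= 150 / (2 - k)).
  { apply (Rmult_le_reg_r (2 - k)); [lra |].
    replace (150 / (2 - k) * (2 - k)) with 150 by (field; lra). lra. }
  lra.
Qed.

Lemma frk_frk_c_lt_c : frk r k (frk r k c) < c.
Proof.
  pose proof c_lt_frk_c as Hc. rewrite frk_c in *. unfold c in *.
  set (A := 4 * exp (r - 2) + k) in *.
  assert (HA : 600 / (2 - k) <= A).
  { replace (600 / (2 - k)) with (4 * (150 / (2 - k))) by (field; lra).
    unfold A. lra. }
  pose proof (sqr_mul_exp_le_inv A ltac:(lra) ltac:(unfold A; lra)).
  assert (576 / A < 2 - k).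
  { apply (Rmult_lt_reg_r A); [lra |].
    replace (576 / A * A) with 576 by (field; lra).
    apply (Rmult_le_compat_l (2 - k)) in HA; [| lra].
    replace ((2 - k) * (600 / (2 - k))) with 600 in HA by (field; lra). nra. }
  unfold frk. lra.
Qed.

Lemma frk_unique_fixed_point_between :
  0 < k -> 2 <= k ^ 2 * exp (r - 2) ->
  exists! p, frk r k (frk r k c) <= p <= frk r k c /\ frk r k p = p.
Proof.
  intros Hk Hu.
  pose proof c_lt_frk_c as Hc. pose proof frk_frk_c_lt_c as Hc2.
  assert (Hgap : continuity (fun x => x - frk r k x))
    by (apply continuity_minus; [apply derivable_continuous, derivable_id | apply continuity_frk]).
  destruct (IVT _ c (frk r k c) Hgap Hc ltac:(lra) ltac:(lra)) as [z [Hz Hfz]].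
  exists z. split; [split; lra |].
  intros p [Hp Hfp].
  destruct (Rlt_le_dec p c) as [Hpc | Hcp].
  - exfalso.
    assert (k < p) by (pose proof (frk_gt_k (frk r k c) ltac:(unfold c in *; lra)); lra).
    pose proof (frk_gt_id_below_c p Hk Hu ltac:(lra)). lra.
  - apply frk_fixed_point_ge_c_unique; lra.
Qed.

End Dynamics.

Theorem lemma3p1 :
  forall k : R, 0 <= k < 2 ->
  exists rstar : R,
    (forall r : R, r >= rstar ->
       frk r k (frk r k c) < c < frk r k c) /\
    (0 < k -> forall r : R, r >= rstar ->
       exists! p : R, frk r k (frk r k c) <= p <= frk r k c /\ frk r k p = p).
Proof.
  intros k Hk.
  set (M := Rmax (150 / (2 - k)) (2 / k ^ 2)).
  assert (HM1 : 150 / (2 - k) <= M) by apply Rmax_l.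
  assert (HM2 : 2 / k ^ 2 <= M) by apply Rmax_r.
  assert (HM0 : 0 < M) by (pose proof (Rdiv_lt_0_compat 150 (2 - k) ltac:(lra) ltac:(lra)); lra).
  assert (Hexp : forall r, r >= 2 + ln M -> M <= exp (r - 2))
    by (intros r Hr; apply le_exp_of_ln_le; lra).
  exists (2 + ln M). split.
  - intros r Hr. pose proof (Hexp r Hr).
    split; [apply frk_frk_c_lt_c | apply c_lt_frk_c]; lra.
  - intros Hk0 r Hr. pose proof (Hexp r Hr) as Hu.
    apply frk_unique_fixed_point_between; try lra.
    replace 2 with (k ^ 2 * (2 / k ^ 2)) at 1 by (field; lra).
    apply Rmult_le_compat_l; [apply pow2_ge_0 | lra].
Qed.
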